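(* Consider the asynchronous stochastic saddle point iteration described in the context, run with a constant step size $\epsilon>0$ and regularization parameter $\delta>0$, and suppose Assumptions (A1)–(A6) of the context hold. Then for every iteration index $t$, every $\mathbf{x}\in\mathcal{X}^N$ and every $\boldsymbol{\lambda}\in\mathbb{R}^M_{+}$, the following holds (for every realization of the data): \[ \hat{\mathcal{L}}_{[\mathbf{t}]}(\mathbf{x}_{[\mathbf{t}]},\boldsymbol{\lambda})-\hat{\mathcal{L}}_{[\mathbf{t}]}(\mathbf{x},\boldsymbol{\lambda}_t) \le \frac{1}{2\epsilon}\Big(\|\mathbf{x}_t-\mathbf{x}\|^2-\|\mathbf{x}_{t+1}-\mathbf{x}\|^2+\|\boldsymbol{\lambda}_t-\boldsymbol{\lambda}\|^2-\|\boldsymbol{\lambda}_{t+1}-\boldsymbol{\lambda}\|^2\Big) \] \[ \qquad+\frac{\epsilon}{2}\Big(\|\nabla_{\boldsymbol{\lambda}}\hat{\mathcal{L}}_{[\mathbf{t}]}(\mathbf{x}_{[\mathbf{t}]},\boldsymbol{\lambda}_t)\|^2+\|\nabla_{\mathbf{x}}\hat{\mathcal{L}}_{[\mathbf{t}]}(\mathbf{x}_{[\mathbf{t}]},\boldsymbol{\lambda}_t)\|^2\Big) +\big\langle \nabla_{\mathbf{x}}\hat{\mathcal{L}}_{[\mathbf{t}]}(\mathbf{x}_{[\mathbf{t}]},\boldsymbol{\lambda}_t),\,\mathbf{x}_{[\mathbf{t}]}-\mathbf{x}_t\big\rangle . \]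
   Context: Network: $\mathcal{G}=(\mathcal{V},\mathcal{E})$ is a directed graph with node set $\mathcal{V}=\{1,\dots,N\}$ and $|\mathcal{E}|=M$ edges; $n_i=\{j:(i,j)\in\mathcal{E}\}$ is the neighborhood of $i$. $\mathcal{X}\subset\mathbb{R}^p$ is a nonempty compact convex set. For each node $i$, $\boldsymbol{\theta}^i$ is a random vector in $\Theta_i\subset\mathbb{R}^q$, and $f^i:\mathcal{X}\times\Theta_i\to\mathbb{R}$ is convex and differentiable in its first argument for every fixed value of the second. For each $(i,j)\in\mathcal{E}$, $h^{ij}:\mathcal{X}\times\mathcal{X}\times\Theta_i\times\Theta_j\to\mathbb{R}$ is jointly convex and differentiable in its first two arguments for every fixed value of the last two, and $\gamma_{ij}\ge 0$. For $\mathbf{x}=(\mathbf{x}^1,\dots,\mathbf{x}^N)\in\mathcal{X}^N$ let $F(\mathbf{x})=\sum_{i=1}^N\mathbb{E}[f^i(\mathbf{x}^i,\boldsymbol{\theta}^i)]$. The underlying problem is $\min_{\mathbf{x}\in\mathcal{X}^N}F(\mathbf{x})$ subject to $\mathbb{E}[h^{ij}(\mathbf{x}^i,\mathbf{x}^j,\boldsymbol{\theta}^i,\boldsymbol{\theta}^j)]\le\gamma_{ij}$ for all $(i,j)\in\mathcal{E}$. Data and delays: at each time $t=1,2,\dots$ node $i$ observes a realization $\boldsymbol{\theta}^i_t$ (i.i.d. copies of $\boldsymbol{\theta}^i$). Each node $i$ has integer delays $\tau_i(t)\ge 0$ with $t-\tau_i(t)\ge 1$ and $\tau_i(t)\le\tau_i(t-1)+1$;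 write $[t]_i:=t-\tau_i(t)$ and $\mathbf{x}_{[\mathbf{t}]}:=(\mathbf{x}^1_{[t]_1},\dots,\mathbf{x}^N_{[t]_N})$. Delayed stochastic augmented Lagrangian: for $\mathbf{x}\in\mathcal{X}^N$ and $\boldsymbol{\lambda}=(\lambda^{ij})_{(i,j)\in\mathcal{E}}\in\mathbb{R}^M$, \[\hat{\mathcal{L}}_{[\mathbf{t}]}(\mathbf{x},\boldsymbol{\lambda})=\sum_{i=1}^N\Big[f^i(\mathbf{x}^i,\boldsymbol{\theta}^i_{[t]_i})+\sum_{j\in n_i}\Big(\lambda^{ij}\big(h^{ij}(\mathbf{x}^i,\mathbf{x}^j,\boldsymbol{\theta}^i_{[t]_i},\boldsymbol{\theta}^j_{[t]_j})-\gamma_{ij}\big)-\tfrac{\delta\epsilon}{2}(\lambda^{ij})^2\Big)\Big],\] and $\nabla_{\mathbf{x}},\nabla_{\boldsymbol{\lambda}}$ denote its partial gradients. Algorithm: start from $\mathbf{x}_1\in\mathcal{X}^N$, $\boldsymbol{\lambda}_1=\mathbf{0}$, and iterate $\mathbf{x}_{t+1}=\mathcal{P}_{\mathcal{X}^N}\big[\mathbf{x}_t-\epsilon\nabla_{\mathbf{x}}\hat{\mathcal{L}}_{[\mathbf{t}]}(\mathbf{x}_{[\mathbf{t}]},\boldsymbol{\lambda}_t)\big]$ and $\boldsymbol{\lambda}_{t+1}=\big[\boldsymbol{\lambda}_t+\epsilon\nabla_{\boldsymbol{\lambda}}\hat{\mathcal{L}}_{[\mathbf{t}]}(\mathbf{x}_{[\mathbf{t}]},\boldsymbol{\lambda}_t)\big]_+$,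 i.e. $\lambda^{ij}_{t+1}=\big[(1-\epsilon^2\delta)\lambda^{ij}_t+\epsilon\big(h^{ij}(\mathbf{x}^i_{[t]_i},\mathbf{x}^j_{[t]_j},\boldsymbol{\theta}^i_{[t]_i},\boldsymbol{\theta}^j_{[t]_j})-\gamma_{ij}\big)\big]_+$. Here $\mathcal{P}_{\mathcal{X}^N}$ is the Euclidean projection onto $\mathcal{X}^N$ and $[\cdot]_+$ is componentwise projection onto the nonnegative orthant. Assumptions: (A1) $\mathcal{G}$ is symmetric ($(i,j)\in\mathcal{E}\iff(j,i)\in\mathcal{E}$) and connected with diameter $D$. (A2) The set of primal-dual optimal pairs of the constrained problem intersects $\mathcal{X}^N\times\mathbb{R}^M_+$. (A3) For all $i$, $t$, $(i,j)\in\mathcal{E}$ and all arguments, $\mathbb{E}\|\nabla_{\mathbf{x}^i}f^i(\mathbf{x}^i,\boldsymbol{\theta}^i_t)\|^2\le\sigma_f^2$ and $\mathbb{E}\|\nabla_{\mathbf{x}^i}h^{ij}(\mathbf{x}^i,\mathbf{x}^j,\boldsymbol{\theta}^i_{[t]_i},\boldsymbol{\theta}^j_{[t]_j})\|^2\le\sigma_h^2$. (A4) $\max_{\mathbf{x}^i,\mathbf{x}^j\in\mathcal{X}}\mathbb{E}[h^{ij}(\mathbf{x}^i,\mathbf{x}^j,\boldsymbol{\theta}^i_t,\boldsymbol{\theta}^j_t)^2]\le\sigma_\lambda^2$ for all $(i,j)\in\mathcal{E}$, $t$. (A5) $|F(\mathbf{x})-F(\mathbf{y})|\le L_f\|\mathbf{x}-\mathbf{y}\|$.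 (A6) $\tau_i(t)\le\tau<\infty$ for all $i,t$. *)

From HB Require Import structures.
From mathcomp Require Import all_boot all_order all_algebra.
From mathcomp Require Import all_classical all_reals.
From mathcomp Require Import topology normedtype derive.
Set Implicit Arguments. Unset Strict Implicit. Unset Printing Implicit Defensive.
Import Order.TTheory GRing.Theory Num.Theory.
Import numFieldNormedType.Exports.
Local Open Scope classical_set_scope.
Local Open Scope ring_scope.

Section Defs.
Variable R : realType.

Definition convex_set_ {V : lmodType R} (C : set V) : Prop :=
  forall x y (a : R), C x -> C y -> 0 <= a <= 1 -> C (a *: x + (1 - a) *: y).

Definition convex_on {V : lmodType R} (C : set V) (g : V -> R) : Prop :=
  forall x y (a : R), C x -> C y -> 0 <= a <= 1 ->
    g (a *: x + (1 - a) *: y) <= a * g x + (1 - a) * g y.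

(* squared Euclidean norm and Euclidean inner product of a matrix
   (a point of (R^p)^N stored with node i in row i) *)
Definition sqn {m n} (x : 'M[R]_(m, n)) : R := \sum_i \sum_k (x i k) ^+ 2.
Definition ip {m n} (x y : 'M[R]_(m, n)) : R := \sum_i \sum_k x i k * y i k.

Definition mgrad {m n} (F : 'M[R]_(m, n) -> R) (x : 'M[R]_(m, n)) : 'M[R]_(m, n) :=
  \matrix_(i, k) ('D_(delta_mx i k) F x).

Definition is_proj {m n} (C : set 'M[R]_(m, n)) (y z : 'M[R]_(m, n)) : Prop :=
  C z /\ forall w, C w -> sqn (y - z) <= sqn (y - w).

Definition prodset {N p} (X : set 'rV[R]_p) : set 'M[R]_(N, p) :=
  [set x | forall i, X (row i x)].

End Defs.

Definition Edge {N : nat} (e : rel 'I_N) := {ij : 'I_N * 'I_N | e ij.1 ij.2}.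

Definition upd {N : nat} {e : rel 'I_N} {R : Type} (lam : Edge e -> R) (k : Edge e) (s : R)
  : Edge e -> R := fun k' => if k' == k then s else lam k'.

Section Lag.
Variables (R : realType) (N p q : nat) (e : rel 'I_N).
Variables (f : 'I_N -> 'rV[R]_p -> 'rV[R]_q -> R)
          (h : 'I_N -> 'I_N -> 'rV[R]_p * 'rV[R]_p -> 'rV[R]_q -> 'rV[R]_q -> R)
          (gam : 'I_N -> 'I_N -> R) (del eps : R).

(* delayed stochastic augmented Lagrangian, with th i = theta^i_{[t]_i} *)
Definition Lhat (th : 'I_N -> 'rV[R]_q) (x : 'M[R]_(N, p)) (lam : Edge e -> R) : R :=
  \sum_(i < N) (f i (row i x) (th i) +
    \sum_(k : Edge e | (sval k).1 == i)
      (lam k * (h i (sval k).2 (row i x, row (sval k).2 x) (th i) (th (sval k).2)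
                 - gam i (sval k).2)
       - del * eps / 2 * (lam k) ^+ 2)).

Definition gradx th x lam : 'M[R]_(N, p) := mgrad (fun y => Lhat th y lam) x.
Definition gradlam th x lam : Edge e -> R :=
  fun k => derive1 (fun s : R => Lhat th x (upd lam k s)) (lam k).

Definition sqnl (lam : Edge e -> R) : R := \sum_k (lam k) ^+ 2.

End Lag.

(** The three-point inequality of each
    projection, combined with convexity of the Lagrangian in [x] (at the
    delayed point where the gradient is evaluated) and its concavity in
    [lambda], yields the bound; the only trace of the delays is the term
    <grad_x, x_[t] - x_t>, because the gradient is evaluated at x_[t] while
    the step starts from x_t. *)
From HB Require Import structures.
From mathcomp Require Import all_boot all_order all_algebra.
From mathcomp Require Import all_classical all_reals.
From mathcomp Require Import topology normedtype derive.
From mathcomp Require Import ring lra.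
Import Order.TTheory GRing.Theory Num.Theory.
Import numFieldNormedType.Exports.
Set Implicit Arguments. Unset Strict Implicit. Unset Printing Implicit Defensive.
Local Open Scope classical_set_scope.
Local Open Scope ring_scope.

Lemma ler_div_step (R : realFieldType) (eps a b g : R) : 0 < eps ->
  2 * eps * a <= b + eps ^+ 2 * g -> a <= 1 / (2 * eps) * b + eps / 2 * g.
Proof.
move=> eps_gt0 le_step; have eps2_gt0 : 0 < 2 * eps by rewrite mulr_gt0.
rewrite -(ler_pM2l eps2_gt0).
suff -> : 2 * eps * (1 / (2 * eps) * b + eps / 2 * g) = b + eps ^+ 2 * g by [].
by field; rewrite gt_eqF.
Qed.

Section EuclideanProjection.
Variables (R : realType) (m n : nat).
Implicit Types (x y z : 'M[R]_(m, n)) (C : set 'M[R]_(m, n)).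

Lemma ipC x y : ip x y = ip y x.
Proof. by apply: eq_bigr => i _; apply: eq_bigr => k _; rewrite mulrC. Qed.

Lemma ipDr x y z : ip x (y + z) = ip x y + ip x z.
Proof.
rewrite /ip -big_split; apply: eq_bigr => i _ /=.
by rewrite -big_split; apply: eq_bigr => k _ /=; rewrite !mxE mulrDr.
Qed.

Lemma ipZr x y (a : R) : ip x (a *: y) = a * ip x y.
Proof.
rewrite /ip mulr_sumr; apply: eq_bigr => i _ /=.
by rewrite mulr_sumr; apply: eq_bigr => k _ /=; rewrite !mxE mulrCA.
Qed.

Lemma ipNr x y : ip x (- y) = - ip x y.
Proof. by rewrite -scaleN1r ipZr mulN1r. Qed.

Lemma sqnE x : sqn x = ip x x.
Proof. by apply: eq_bigr => i _; apply: eq_bigr => k _; rewrite expr2. Qed.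

Lemma sqn_ge0 x : 0 <= sqn x.
Proof. by apply: sumr_ge0 => i _; apply: sumr_ge0 => k _; exact: sqr_ge0. Qed.

Lemma sqnD x y : sqn (x + y) = sqn x + sqn y + 2 * ip x y.
Proof.
rewrite !sqnE ipDr [ip (x + y) x]ipC [ip (x + y) y]ipC !ipDr [ip y x]ipC; ring.
Qed.

Lemma sqnZ x (a : R) : sqn (a *: x) = a ^+ 2 * sqn x.
Proof. by rewrite !sqnE ipZr ipC ipZr mulrA -expr2. Qed.

Lemma proj_obtuse C z P y :
  convex_set_ C -> is_proj C z P -> C y -> ip (z - P) (y - P) <= 0.
Proof.
move=> cvxC [CP minP] Cy.
set c := ip (z - P) (y - P); set d := sqn (y - P).
have d_ge0 : 0 <= d by exact: sqn_ge0.
(* Minimality of P against the points P + a (y - P) of C gives 2 c <= a d for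
   a in (0, 1]; the choice a = c / (c + d) then forces c <= 0. *)
have c_le a : 0 < a <= 1 -> 2 * c <= a * d.
  move=> /andP[a_gt0 a_le1].
  have := minP _ (cvxC _ _ _ Cy CP (andb_true_intro (conj (ltW a_gt0) a_le1))).
  have -> : z - (a *: y + (1 - a) *: P) = (z - P) + (- a) *: (y - P).
    by apply/matrixP => i j; rewrite !mxE; ring.
  rewrite (sqnD (z - P)) sqnZ ipZr -/c -/d sqrrN => le_min.
  by rewrite -(ler_pM2l a_gt0); nra.
rewrite leNgt; apply/negP => c_gt0.
have cd_gt0 : 0 < c + d by rewrite ltr_wpDr.
have := c_le (c / (c + d)).
rewrite divr_gt0 // ler_pdivrMr // mul1r lerDl d_ge0 => /(_ isT).
by rewrite mulrAC ler_pdivlMr //; nra.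
Qed.

Lemma proj_sqn_le C z P y :
  convex_set_ C -> is_proj C z P -> C y -> sqn (P - y) <= sqn (z - y).
Proof.
move=> cvxC projP Cy.
have acute : 0 <= ip (z - P) (P - y).
  by rewrite -[P - y]opprB ipNr oppr_ge0 (proj_obtuse cvxC projP Cy).
rewrite -[z - y](subrKA P) (sqnD (z - P)).
by have := sqn_ge0 (z - P); lra.
Qed.

Lemma proj_step_ip_le C x g x' y (eps : R) :
  0 < eps -> convex_set_ C -> is_proj C (x - eps *: g) x' -> C y ->
  ip g (x - y) <= 1 / (2 * eps) * (sqn (x - y) - sqn (x' - y)) + eps / 2 * sqn g.
Proof.
move=> eps_gt0 cvxC projx' Cy.
have := proj_sqn_le cvxC projx' Cy.
rewrite (_ : x - eps *: g - y = (x - y) + (- eps) *: g); last first.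
  by apply/matrixP => i j; rewrite !mxE; ring.
rewrite (sqnD (x - y)) sqnZ ipZr ipC sqrrN => sqn_le.
by apply: ler_div_step => //; lra.
Qed.

End EuclideanProjection.

Lemma sqr_max0_sub_le (R : realDomainType) (z b : R) :
  0 <= b -> (Num.max 0 z - b) ^+ 2 <= (z - b) ^+ 2.
Proof. by move=> b_ge0; case: (leP 0 z) => z0; nra. Qed.

Lemma max0_step_le (R : realFieldType) (I : finType) (eps : R) (a g a' b : I -> R) :
  0 < eps -> (forall i, a' i = Num.max 0 (a i + eps * g i)) -> (forall i, 0 <= b i) ->
  \sum_i g i * (b i - a i) <=
    1 / (2 * eps) * (\sum_i (a i - b i) ^+ 2 - \sum_i (a' i - b i) ^+ 2)
    + eps / 2 * \sum_i g i ^+ 2.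
Proof.
move=> eps_gt0 a'E b_ge0; apply: ler_div_step => //.
rewrite !mulr_sumr -sumrB -big_split; apply: ler_sum => i _ /=.
by have := sqr_max0_sub_le (a i + eps * g i) (b_ge0 i); rewrite a'E; nra.
Qed.

Lemma derive1_quadratic (R : realType) (a b c s0 : R) :
  derive1 (fun s : R => a + (s * b - c * s ^+ 2)) s0 = b - 2 * c * s0.
Proof.
rewrite derive1E (_ : (fun s => _) = cst a + (id * cst b - cst c * id ^+ 2)).
  rewrite derive_val !fctE /= !scaler0 !addr0 expr1.
  by rewrite -[LHS]/(0 + (0 + b * 1 - c * (2 * s0 * 1))); ring.
by apply/funext => s; rewrite !fctE.
Qed.

Lemma differentiable_big (R : realType) (V : normedModType R) (I : Type)
    (r : seq I) (P : pred I) (g : I -> V -> R) x :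
  (forall i, P i -> differentiable (g i) x) ->
  differentiable (fun y => \sum_(i <- r | P i) g i y) x.
Proof.
move=> dg; elim: r => [|a r IH].
  rewrite (_ : (fun y => _) = cst 0); first exact: differentiable_cst.
  by apply/funext => y; rewrite big_nil.
case Pa: (P a).
  rewrite (_ : (fun y => _) = g a + (fun y => \sum_(i <- r | P i) g i y)).
    by apply: differentiableD => //; exact: dg.
  by apply/funext => y; rewrite big_cons Pa.
rewrite (_ : (fun y => _) = (fun y => \sum_(i <- r | P i) g i y)) //.
by apply/funext => y; rewrite big_cons Pa.
Qed.

Lemma differentiable_row (R : realType) m n i (x : 'M[R]_(m, n)) :
  differentiable (row i) x.
Proof.
apply: (@linear_differentiable _ _ _ (row i)).
move=> M s /= /(nbhs_ballP (row i M)) [r r_gt0 rs].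
apply/nbhs_ballP; exists r => // M' [r_gt0' MM']; apply: rs; split => // a j.
by rewrite !mxE; exact: MM'.
Qed.

Lemma ip_mgrad (R : realType) m n (F : 'M[R]_(m, n) -> R) x v :
  differentiable F x -> ip (mgrad F x) v = 'D_v F x.
Proof.
move=> dF; rewrite deriveE // {2}(matrix_sum_delta v) linear_sum.
apply: eq_bigr => i _; rewrite linear_sum; apply: eq_bigr => k _.
by rewrite linearZ /= mxE deriveE // mulrC.
Qed.

Lemma convex_on_derive_le (R : realType) (V : normedModType R) (C : set V)
    (F : V -> R) x y :
  convex_on C F -> C x -> C y -> derivable F x (y - x) ->
  'D_(y - x) F x <= F y - F x.
Proof.
move=> cvxF Cx Cy dF.
rewrite /derive cvg_at_rightE //; apply: limr_le.
  by apply/cvg_ex; eexists; apply: cvg_dnbhs_at_right; exact: dF.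
near=> s.
have s_gt0 : 0 < s by near: s; exact: nbhs_right_gt.
have s_le1 : s <= 1 by near: s; exact: nbhs_right_le.
have := cvxF y x s Cy Cx; rewrite s_le1 ltW //= => /(_ isT) cvx_s.
rewrite /= -[X in X <= _]/(s^-1 * (F (s *: (y - x) + x) - F x)) ler_pdivrMl //.
rewrite (_ : s *: (y - x) + x = s *: y + (1 - s) *: x); last first.
  by rewrite scalerBr scalerBl scale1r -addrA (addrC (- _)).
by lra.
Unshelve. all: by end_near. Qed.

Lemma mgrad_convex_le (R : realType) m n (C : set 'M[R]_(m, n)) F x y :
  convex_on C F -> C x -> C y -> differentiable F x ->
  F x - F y <= ip (mgrad F x) (x - y).
Proof.
move=> cvxF Cx Cy dF.
have := convex_on_derive_le cvxF Cx Cy (diff_derivable dF).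
by rewrite -ip_mgrad // -opprB ipNr; lra.
Qed.

Lemma row_convex_comb (R : realType) m n i (a : R) (x y : 'M[R]_(m, n)) :
  row i (a *: x + (1 - a) *: y) = a *: row i x + (1 - a) *: row i y.
Proof. by apply/rowP => j; rewrite !mxE. Qed.

Lemma convex_prodset (R : realType) N p (X : set 'rV[R]_p) :
  convex_set_ X -> convex_set_ (@prodset R N p X).
Proof. by move=> cvxX x y a Px Py a01 i; rewrite row_convex_comb; exact: cvxX. Qed.

Section Lagrangian.
Variables (R : realType) (N p q : nat) (e : rel 'I_N).
Variables (f : 'I_N -> 'rV[R]_p -> 'rV[R]_q -> R)
          (h : 'I_N -> 'I_N -> 'rV[R]_p * 'rV[R]_p -> 'rV[R]_q -> 'rV[R]_q -> R)
          (gam : 'I_N -> 'I_N -> R) (del eps : R).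
Implicit Types (th : 'I_N -> 'rV[R]_q) (x : 'M[R]_(N, p)) (lam l : Edge e -> R).

Definition objective th x : R := \sum_(i < N) f i (row i x) (th i).

Definition residual th x (k : Edge e) : R :=
  h (sval k).1 (sval k).2 (row (sval k).1 x, row (sval k).2 x)
    (th (sval k).1) (th (sval k).2) - gam (sval k).1 (sval k).2.

Definition penalty th x lam : R :=
  \sum_k (lam k * residual th x k - del * eps / 2 * lam k ^+ 2).

Lemma LhatE th x lam :
  Lhat f h gam del eps th x lam = objective th x + penalty th x lam.
Proof.
rewrite /Lhat big_split /=; congr (_ + _).
under eq_bigr do rewrite big_mkcond /=.
rewrite exchange_big /=; apply: eq_bigr => k _.
by rewrite -big_mkcond /= (big_pred1 (sval k).1) // => j; rewrite /= eq_sym.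
Qed.

Lemma gradlamE th x lam k :
  gradlam f h gam del eps th x lam k = residual th x k - del * eps * lam k.
Proof.
rewrite /gradlam (_ : (fun s => _) = fun s =>
    Lhat f h gam del eps th x lam
    - (lam k * residual th x k - del * eps / 2 * lam k ^+ 2)
    + (s * residual th x k - del * eps / 2 * s ^+ 2)).
  by rewrite derive1_quadratic mulrCA divff ?mulr1 ?pnatr_eq0.
apply/funext => s; rewrite !LhatE /penalty (bigD1 k) //=.
rewrite [in RHS](bigD1 k) //= /upd eqxx.
under eq_bigr => k' nk do rewrite (negbTE nk).
ring.
Qed.

Lemma Lhat_concave_le th x lam l : 0 <= del * eps ->
  Lhat f h gam del eps th x l - Lhat f h gam del eps th x lam <=
    \sum_k gradlam f h gam del eps th x lam k * (l k - lam k).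
Proof.
move=> de_ge0; rewrite !LhatE opprD addrACA subrr add0r -sumrB.
apply: ler_sum => k _.
have : 0 <= del * eps * (l k - lam k) ^+ 2 by rewrite mulr_ge0 ?sqr_ge0.
by rewrite gradlamE; nra.
Qed.

Lemma differentiable_Lhat th x lam :
  (forall i, differentiable (fun w => f i w (th i)) (row i x)) ->
  (forall k : Edge e, differentiable
     (fun w => h (sval k).1 (sval k).2 w (th (sval k).1) (th (sval k).2))
     (row (sval k).1 x, row (sval k).2 x)) ->
  differentiable (fun z => Lhat f h gam del eps th z lam) x.
Proof.
move=> df dh.
rewrite (_ : (fun z => _) = (objective th) + (penalty th ^~ lam)); last first.
  by apply/funext => z; rewrite LhatE.
apply: differentiableD; apply: differentiable_big.
  by move=> i _; exact: (differentiable_comp (differentiable_row i x) (df i)).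
move=> k _.
pose k1 := (sval k).1; pose k2 := (sval k).2.
rewrite (_ : (fun z => _) =
  (lam k *: (((fun w => h k1 k2 w (th k1) (th k2)) \o (fun z => (row k1 z, row k2 z)))
      \- cst (gam k1 k2))) \- cst (del * eps / 2 * lam k ^+ 2)) //.
apply: differentiableB => //; apply: differentiableZ; apply: differentiableB => //.
apply: differentiable_comp; last exact: dh.
by apply: differentiable_pair; exact: differentiable_row.
Qed.

Lemma convex_on_Lhat th lam (X : set 'rV[R]_p) :
  (forall i, convex_on X (fun w => f i w (th i))) ->
  (forall k : Edge e, convex_on (X `*` X)
     (fun w => h (sval k).1 (sval k).2 w (th (sval k).1) (th (sval k).2))) ->
  (forall k, 0 <= lam k) ->
  convex_on (prodset X) (fun z => Lhat f h gam del eps th z lam).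
Proof.
move=> cvxf cvxh lam_ge0 x y a Px Py a01.
rewrite !LhatE.
have cvx_obj : objective th (a *: x + (1 - a) *: y)
    <= a * objective th x + (1 - a) * objective th y.
  rewrite /objective !mulr_sumr -big_split; apply: ler_sum => i _.
  by rewrite row_convex_comb; exact: cvxf.
have cvx_pen : penalty th (a *: x + (1 - a) *: y) lam
    <= a * penalty th x lam + (1 - a) * penalty th y lam.
  rewrite /penalty !mulr_sumr -big_split; apply: ler_sum => k _.
  rewrite /residual !row_convex_comb.
  have := cvxh k (row (sval k).1 x, row (sval k).2 x) (row (sval k).1 y, row (sval k).2 y)
    a (conj (Px _) (Px _)) (conj (Py _) (Py _)) a01.
  by move=> /(ler_wpM2l (lam_ge0 k)) /=; nra.
by lra.
Qed.

End Lagrangian.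

Lemma proj_iterates_in (R : realType) m n (C : set 'M[R]_(m, n))
    (x z : nat -> 'M[R]_(m, n)) :
  C (x 1%N) -> (forall t, (1 <= t)%N -> is_proj C (z t) (x t.+1)) ->
  forall t, (1 <= t)%N -> C (x t).
Proof. by move=> C1 projx [//|[//|t]] _; have [] := projx t.+1 isT. Qed.

Lemma max0_iterates_ge0 (R : realDomainType) (I : Type) (lam step : nat -> I -> R) :
  (forall k, 0 <= lam 1%N k) ->
  (forall t k, (1 <= t)%N -> lam t.+1 k = Num.max 0 (step t k)) ->
  forall t, (1 <= t)%N -> forall k, 0 <= lam t k.
Proof. by move=> lam1 lamS [//|[//|t]] _ k; rewrite lamS // le_max lexx. Qed.

Theorem lemma1 (R : realType) (N p q : nat) (e : rel 'I_N)
  (X : set 'rV[R]_p) (Theta : 'I_N -> set 'rV[R]_q)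
  (f : 'I_N -> 'rV[R]_p -> 'rV[R]_q -> R)
  (h : 'I_N -> 'I_N -> 'rV[R]_p * 'rV[R]_p -> 'rV[R]_q -> 'rV[R]_q -> R)
  (gam : 'I_N -> 'I_N -> R) (eps del : R)
  (tau : 'I_N -> nat -> nat) (taub : nat)
  (theta : 'I_N -> nat -> 'rV[R]_q)
  (x : nat -> 'M[R]_(N, p)) (lam : nat -> Edge e -> R) :
  (* (A1): symmetric, connected graph *)
  (forall i j, e i j = e j i) ->
  (forall i j, connect e i j) ->
  (* X nonempty, compact, convex *)
  X !=set0 -> compact X -> convex_set_ X ->
  (* f^i convex and differentiable in its first argument *)
  (forall i th, Theta i th ->
     convex_on X (fun y => f i y th) /\
     (forall y, X y -> differentiable (fun z => f i z th) y)) ->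
  (* h^ij jointly convex and differentiable in its first two arguments *)
  (forall i j thi thj, e i j -> Theta i thi -> Theta j thj ->
     convex_on (X `*` X) (fun z => h i j z thi thj) /\
     (forall z, (X `*` X) z -> differentiable (fun w => h i j w thi thj) z)) ->
  (forall i j, e i j -> 0 <= gam i j) ->
  0 < eps -> 0 < del ->
  (* data realizations *)
  (forall i t, (1 <= t)%N -> Theta i (theta i t)) ->
  (* delays, and (A6) *)
  (forall i t, (1 <= t)%N -> (tau i t < t)%N) ->
  (forall i t, (2 <= t)%N -> (tau i t <= (tau i t.-1).+1)%N) ->
  (forall i t, (1 <= t)%N -> (tau i t <= taub)%N) ->
  (* the algorithm *)
  prodset X (x 1%N) ->
  (forall k, lam 1%N k = 0) ->
  let th t := fun i => theta i (t - tau i t)%N in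
  let xd t := \matrix_(i, k) x (t - tau i t)%N i k in
  (forall t, (1 <= t)%N ->
     is_proj (prodset X)
       (x t - eps *: gradx f h gam del eps (th t) (xd t) (lam t)) (x t.+1)) ->
  (forall t k, (1 <= t)%N ->
     lam t.+1 k = Num.max 0 (lam t k + eps * gradlam f h gam del eps (th t) (xd t) (lam t) k)) ->
  (* conclusion *)
  forall t, (1 <= t)%N ->
  forall (y : 'M[R]_(N, p)) (l : Edge e -> R),
    prodset X y -> (forall k, 0 <= l k) ->
    Lhat f h gam del eps (th t) (xd t) l - Lhat f h gam del eps (th t) y (lam t)
    <= 1 / (2 * eps) * (sqn (x t - y) - sqn (x t.+1 - y)
                        + sqnl (fun k => lam t k - l k) - sqnl (fun k => lam t.+1 k - l k))
       + eps / 2 * (sqnl (gradlam f h gam del eps (th t) (xd t) (lam t))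
                    + sqn (gradx f h gam del eps (th t) (xd t) (lam t)))
       + ip (gradx f h gam del eps (th t) (xd t) (lam t)) (xd t - x t).
Proof.
move=> _ _ _ _ cvxX fX hX _ eps_gt0 del_gt0 Theta_th tau_lt _ _ x1 lam1 th xd
  projx lamS t t_ge1 y l Py l_ge0.
set gx := gradx _ _ _ _ _ _ _ _.
have lam_ge0 : forall k, 0 <= lam t k.
  by apply: (max0_iterates_ge0 _ lamS t_ge1) => k; rewrite lam1.
have Pxd : prodset X (xd t).
  move=> i; rewrite (_ : row i _ = row i (x (t - tau i t)%N)).
    by apply: (proj_iterates_in x1 projx); rewrite subn_gt0 tau_lt.
  by apply/rowP => j; rewrite !mxE.
have Th i : Theta i (th t i) by apply: Theta_th; rewrite subn_gt0 tau_lt.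
have primal : Lhat f h gam del eps (th t) (xd t) (lam t)
    - Lhat f h gam del eps (th t) y (lam t) <= ip gx (xd t - y).
  apply: (mgrad_convex_le _ Pxd Py).
    apply: convex_on_Lhat => [i|k|//]; first exact: (fX _ _ (Th i)).1.
    exact: (hX _ _ _ _ (svalP k) (Th _) (Th _)).1.
  apply: differentiable_Lhat => [i|k]; first exact: (fX _ _ (Th i)).2 _ (Pxd i).
  by apply: (hX _ _ _ _ (svalP k) (Th _) (Th _)).2; split; exact: Pxd.
have dual := Lhat_concave_le f h gam (th t) (xd t) (lam t) l
  (ltW (mulr_gt0 del_gt0 eps_gt0)).
have primal_step := proj_step_ip_le eps_gt0 (convex_prodset cvxX) (projx t t_ge1) Py.
have dual_step := max0_step_le eps_gt0 (lamS t ^~ t_ge1) l_ge0.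
rewrite -[xd t - y](subrKA (x t)) ipDr in primal.
rewrite /sqnl; lra.
Qed.
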